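(* Let $b,\ell,u$ be integers with $\ell\geqslant u\geqslant 0$ and $b\geqslant 10\ell$. There exists a set $\mathfrak{B}$ of integer $2\times3$ matrices which is the disjoint union of two subsets $\mathfrak{B}^0$ and $\mathfrak{B}^1$ with $|\mathfrak{B}^0|=2(\ell-u)$ and $|\mathfrak{B}^1|=2u$, such that $\sigma_r(M)=(0,0)$ and $\sigma_c(M)=(-4,2,2)$ for all $M\in\mathfrak{B}^0$, $\sigma_r(M)=(2,-2)$ and $\sigma_c(M)=(-4,2,2)$ for all $M\in\mathfrak{B}^1$, and the multiset of absolute values of all entries of all matrices in $\mathfrak{B}$ is exactly the set $[b-6\ell+1,b+2\ell]\cup[2b-8\ell+2,2b]_2$ (each element occurring once).
   Context: For integers $a\equiv b\pmod d$ with $d\geqslant1$, $[a,b]_d=\{a+id: 0\leqslant i\leqslant (b-a)/d\}$ if $a\leqslant b$ and $[a,b]_d=\varnothing$ if $a>b$; $[a,b]=[a,b]_1$. For a matrix $M$, $\sigma_r(M)$ is the sequence of its row sums and $\sigma_c(M)$ the sequence of its column sums. *)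

From HB Require Import structures.
From mathcomp Require Import all_boot all_order all_algebra.
Set Implicit Arguments. Unset Strict Implicit. Unset Printing Implicit Defensive.
Import Order.TTheory GRing.Theory Num.Theory.
Local Open Scope ring_scope.

Definition intv (a c d : int) : seq int :=
  if a <= c then [seq a + (i%:Z) * d | i <- iota 0 (absz ((c - a) %/ d)%Z).+1]
  else [::].

Definition sigma_r (M : 'M[int]_(2,3)) : seq int :=
  [seq \sum_(j < 3) M i j | i <- enum 'I_2].
Definition sigma_c (M : 'M[int]_(2,3)) : seq int :=
  [seq \sum_(i < 2) M i j | j <- enum 'I_3].

Definition entries (M : 'M[int]_(2,3)) : seq int :=
  [seq M i j | i <- enum 'I_2, j <- enum 'I_3].

From HB Require Import structures.
From mathcomp Require Import all_boot all_order all_algebra.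
From mathcomp Require Import zify.

(* For each j < l put x = c + 1 + 4 j and y = c + 1 + 4 l + 4 j, where
   c = b - 6 l.  The twelve numbers x..x+3, y..y+3, x+y, x+y+2, x+y+4, x+y+6
   are the absolute values of the entries of two matrices with row sums (0,0)
   and equally of two matrices with row sums (2,-2), all four having column
   sums (-4,2,2): every matrix has rows (s, -x', -y') and (-(s+4), x'+2, y'+2).
   Using the first pair for l - u indices j and the second for u of them, the
   x- and y-runs tile [c+1, c+8l] = [b-6l+1, b+2l] while the sums x+y+2i tile
   [2b-8l+2, 2b] with step 2; b >= 10 l keeps these two ranges disjoint. *)

Set Implicit Arguments.
Unset Strict Implicit.
Unset Printing Implicit Defensive.

Import Order.TTheory GRing.Theory Num.Theory.
Local Open Scope ring_scope.

Lemma perm_map_nth_iota (T : eqType) (x0 : T) (s : seq T) (idx : seq nat) :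
  perm_eq idx (iota 0 (size s)) -> perm_eq [seq nth x0 s i | i <- idx] s.
Proof.
move=> idx_perm; rewrite -{2}(take_size s) -(map_nth_iota0 x0 (leqnn (size s))).
exact: perm_map.
Qed.

Lemma perm_flatten_map (I T : eqType) (f g : I -> seq T) (s : seq I) :
  {in s, forall j, perm_eq (f j) (g j)} ->
  perm_eq (flatten (map f s)) (flatten (map g s)).
Proof.
elim: s => //= j s IH fg; rewrite perm_cat ?fg ?mem_head // IH // => i si.
by rewrite fg // inE si orbT.
Qed.

Lemma perm_flatten_cat3 (I : Type) (T : eqType) (A B C : I -> seq T) (s : seq I) :
  perm_eq (flatten [seq A j ++ B j ++ C j | j <- s])
          (flatten (map A s) ++ flatten (map B s) ++ flatten (map C s)).
Proof.
elim: s => //= j s IH; apply/permP => p; have := permP IH p.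
by rewrite !count_cat; lia.
Qed.

Lemma iota_flatten (k m n : nat) :
  iota m (k * n) = flatten [seq iota (m + k * j) k | j <- iota 0 n].
Proof.
elim: n => [|n IH]; first by rewrite muln0.
by rewrite mulnSr iotaD IH -addn1 iotaD map_cat flatten_cat /= cats0.
Qed.

Lemma size_flatten_map_const (I T : Type) (F : I -> seq T) (m : nat) (s : seq I) :
  (forall j, size (F j) = m) -> size (flatten (map F s)) = (m * size s)%N.
Proof.
by move=> sizeF; elim: s => [|j s IH] /=; rewrite ?muln0 // size_cat IH sizeF mulnS.
Qed.

Lemma uniq_flatten_map_nonempty (T U : eqType) (F : T -> seq U) (s : seq T) :
  (forall x, F x != [::]) -> uniq (flatten (map F s)) -> uniq s.
Proof.
move=> F_neq0; elim: s => //= x s IH; rewrite cat_uniq => /and3P[_ disj /IH->].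
rewrite andbT; apply: contraNN disj => xs.
case Fx: (F x) (F_neq0 x) => [//|e t] _; apply/hasP; exists e; last exact: mem_head.
by apply/flatten_mapP; exists x; rewrite // Fx mem_head.
Qed.

Lemma intv_iota (a d : int) (m : nat) : 0 < d ->
  intv a (a + m%:Z * d - d) d = [seq a + i%:Z * d | i <- iota 0 m].
Proof.
move=> d_gt0; rewrite /intv; case: m => [|m].
  by rewrite ifF //; apply/negbTE; rewrite -ltNge; lia.
rewrite ifT; last by lia.
have -> : a + m.+1%:Z * d - d - a = m%:Z * d by lia.
by rewrite mulzK ?gt_eqF.
Qed.

Definition mx23 (a1 a2 a3 d1 d2 d3 : int) : 'M[int]_(2,3) :=
  \matrix_(i < 2, j < 3) nth 0 (if val i == 0%N then [:: a1; a2; a3] else [:: d1; d2; d3]) j.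

Lemma entries_mx23 a1 a2 a3 d1 d2 d3 :
  entries (mx23 a1 a2 a3 d1 d2 d3) = [:: a1; a2; a3; d1; d2; d3].
Proof. by rewrite /entries !enum_ordSl enum_ord0 /= !mxE. Qed.

Lemma sigma_r_mx23 a1 a2 a3 d1 d2 d3 :
  sigma_r (mx23 a1 a2 a3 d1 d2 d3) = [:: a1 + a2 + a3; d1 + d2 + d3].
Proof.
by rewrite /sigma_r !enum_ordSl enum_ord0 /= !big_ord_recr !big_ord0 /= !mxE /= !add0r.
Qed.

Lemma sigma_c_mx23 a1 a2 a3 d1 d2 d3 :
  sigma_c (mx23 a1 a2 a3 d1 d2 d3) = [:: a1 + d1; a2 + d2; a3 + d3].
Proof.
by rewrite /sigma_c !enum_ordSl enum_ord0 /= !big_ord_recr !big_ord0 /= !mxE /= !add0r.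
Qed.

Definition gadget (s x y : int) : 'M[int]_(2,3) :=
  mx23 s (- x) (- y) (- (s + 4)) (x + 2) (y + 2).

Lemma sigma_r_gadget s x y : sigma_r (gadget s x y) = [:: s - x - y; x + y - s].
Proof. by rewrite sigma_r_mx23; congr [:: _; _]; lia. Qed.

Lemma sigma_c_gadget s x y : sigma_c (gadget s x y) = [:: -4; 2; 2].
Proof. by rewrite sigma_c_mx23; congr [:: _; _; _]; lia. Qed.

Definition balanced_pair (x y : int) : seq 'M[int]_(2,3) :=
  [:: gadget (x + y) x y; gadget (x + y + 2) (x + 1) (y + 1)].

Definition tilted_pair (x y : int) : seq 'M[int]_(2,3) :=
  [:: gadget (- (x + y + 4)) (- (x + 3)) (- (y + 3)); gadget (x + y + 2) x y].

Lemma sigma_balanced_pair x y M : M \in balanced_pair x y ->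
  sigma_r M = [:: 0; 0] /\ sigma_c M = [:: -4; 2; 2].
Proof.
rewrite !inE => /orP[]/eqP->; rewrite sigma_r_gadget sigma_c_gadget;
  by split=> //; congr [:: _; _]; lia.
Qed.

Lemma sigma_tilted_pair x y M : M \in tilted_pair x y ->
  sigma_r M = [:: 2; -2] /\ sigma_c M = [:: -4; 2; 2].
Proof.
rewrite !inE => /orP[]/eqP->; rewrite sigma_r_gadget sigma_c_gadget;
  by split=> //; congr [:: _; _]; lia.
Qed.

Definition abs_entries (L : seq 'M[int]_(2,3)) : seq int :=
  [seq `|e| | e <- flatten [seq entries M | M <- L]].

Lemma abs_entries_cat L1 L2 :
  abs_entries (L1 ++ L2) = abs_entries L1 ++ abs_entries L2.
Proof. by rewrite /abs_entries map_cat flatten_cat map_cat. Qed.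

Lemma abs_entries_flatten (Ls : seq (seq 'M[int]_(2,3))) :
  abs_entries (flatten Ls) = flatten (map abs_entries Ls).
Proof. by elim: Ls => //= L Ls IH; rewrite abs_entries_cat IH. Qed.

Definition block (x y : int) : seq int :=
  [seq x + i%:Z | i <- iota 0 4] ++ [seq y + i%:Z | i <- iota 0 4] ++
  [seq x + y + i%:Z * 2 | i <- iota 0 4].

Lemma abs_entries_balanced_pair x y : 0 <= x -> 0 <= y ->
  perm_eq (abs_entries (balanced_pair x y)) (block x y).
Proof.
move=> x_ge0 y_ge0.
have -> : abs_entries (balanced_pair x y) =
    [seq nth 0 (block x y) i | i <- [:: 8; 0; 4; 10; 2; 6; 9; 1; 5; 11; 3; 7]%N].
  by rewrite /abs_entries /= !entries_mx23 /=; repeat congr (_ :: _); lia.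
exact: perm_map_nth_iota.
Qed.

Lemma abs_entries_tilted_pair x y : 0 <= x -> 0 <= y ->
  perm_eq (abs_entries (tilted_pair x y)) (block x y).
Proof.
move=> x_ge0 y_ge0.
have -> : abs_entries (tilted_pair x y) =
    [seq nth 0 (block x y) i | i <- [:: 10; 3; 7; 8; 1; 5; 9; 0; 4; 11; 2; 6]%N].
  by rewrite /abs_entries /= !entries_mx23 /=; repeat congr (_ :: _); lia.
exact: perm_map_nth_iota.
Qed.

Section Construction.

Variables (c : int) (n : nat).
Hypothesis c_ge : 4 * n%:Z <= c.

Definition run_lo (j : nat) : int := c + 1 + (4 * j)%:Z.
Definition run_hi (j : nat) : int := c + 1 + (4 * n + 4 * j)%:Z.

Definition balanced_family (k : nat) : seq 'M[int]_(2,3) :=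
  flatten [seq balanced_pair (run_lo j) (run_hi j) | j <- iota k (n - k)].
Definition tilted_family (k : nat) : seq 'M[int]_(2,3) :=
  flatten [seq tilted_pair (run_lo j) (run_hi j) | j <- iota 0 k].

Definition target_values : seq int :=
  [seq c + 1 + i%:Z | i <- iota 0 (4 * n)] ++
  [seq c + 1 + i%:Z | i <- iota (4 * n) (4 * n)] ++
  [seq 2 * c + 4 * n%:Z + 2 + i%:Z * 2 | i <- iota 0 (4 * n)].

Lemma block_run j : block (run_lo j) (run_hi j) =
  [seq c + 1 + i%:Z | i <- iota (4 * j) 4] ++
  [seq c + 1 + i%:Z | i <- iota (4 * n + 4 * j) 4] ++
  [seq 2 * c + 4 * n%:Z + 2 + i%:Z * 2 | i <- iota (4 * j) 4].
Proof. by rewrite /block /run_lo /run_hi /=; repeat congr (_ :: _); lia. Qed.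

Lemma perm_blocks_target :
  perm_eq (flatten [seq block (run_lo j) (run_hi j) | j <- iota 0 n]) target_values.
Proof.
rewrite (eq_map block_run); apply: perm_trans (perm_flatten_cat3 _ _ _ _) _.
by rewrite /target_values (iota_flatten 4 0) (iota_flatten 4 (4 * n)) !map_flatten -!map_comp.
Qed.

Lemma uniq_target_values : uniq target_values.
Proof.
rewrite /target_values catA -map_cat -iotaD cat_uniq; apply/and3P; split.
- by rewrite map_inj_uniq ?iota_uniq // => i i'; lia.
- apply/hasPn => x /mapP[i _ ->]; apply/negP => /mapP[i'].
  by rewrite mem_iota => /andP[_ i'_lt]; lia.
- by rewrite map_inj_uniq ?iota_uniq // => i i'; lia.
Qed.

Lemma abs_entries_families k : (k <= n)%N ->
  perm_eq (abs_entries (balanced_family k ++ tilted_family k)) target_values.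
Proof.
move=> k_le_n; apply: perm_trans perm_blocks_target.
rewrite abs_entries_cat !abs_entries_flatten -!map_comp perm_catC.
rewrite -[in iota 0 n](subnKC k_le_n) iotaD map_cat flatten_cat.
apply: perm_cat; apply: perm_flatten_map => j _ /=; rewrite /run_lo /run_hi.
- by apply: abs_entries_tilted_pair; lia.
- by apply: abs_entries_balanced_pair; lia.
Qed.

End Construction.

Theorem lemma2p5 (b l u : int) :
  0 <= u -> u <= l -> 10 * l <= b ->
  exists B0 B1 : seq 'M[int]_(2,3),
    uniq (B0 ++ B1) /\
    (size B0)%:Z = 2 * (l - u) /\
    (size B1)%:Z = 2 * u /\
    (forall M, M \in B0 -> sigma_r M = [:: 0; 0] /\ sigma_c M = [:: -4; 2; 2]) /\
    (forall M, M \in B1 -> sigma_r M = [:: 2; -2] /\ sigma_c M = [:: -4; 2; 2]) /\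
    perm_eq [seq `|x| | x <- flatten [seq entries M | M <- B0 ++ B1]]
            (undup (intv (b - 6 * l + 1) (b + 2 * l) 1 ++
                    intv (2 * b - 8 * l + 2) (2 * b) 2)).
Proof.
case: u => [k|//] _; case: l => [n|//] k_le_n b_ge.
set c := b - 6 * n%:Z; have c_ge : 4 * n%:Z <= c by lia.
have k_le_n_nat : (k <= n)%N by lia.
have intv_target : intv (b - 6 * n%:Z + 1) (b + 2 * n%:Z) 1 ++
    intv (2 * b - 8 * n%:Z + 2) (2 * b) 2 = target_values c n.
  rewrite (_ : b + 2 * n%:Z = c + 1 + (4 * n + 4 * n)%N%:Z * 1 - 1); last by lia.
  rewrite (_ : 2 * b - 8 * n%:Z + 2 = 2 * c + 4 * n%:Z + 2); last by lia.
  rewrite (_ : 2 * b = 2 * c + 4 * n%:Z + 2 + (4 * n)%N%:Z * 2 - 2); last by lia.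
  rewrite !intv_iota // iotaD map_cat -catA.
  by congr (_ ++ _ ++ _); apply: eq_map => i; rewrite mulr1.
have entries_perm := abs_entries_families c_ge k_le_n_nat.
exists (balanced_family c n k), (tilted_family c n k); split.
  apply: (uniq_flatten_map_nonempty (F := entries)) => [M|].
    by rewrite /entries !enum_ordSl.
  by move: (uniq_target_values c_ge); rewrite -(perm_uniq entries_perm) => /map_uniq.
split; first by rewrite /balanced_family (size_flatten_map_const (m := 2)) // size_iota; lia.
split; first by rewrite /tilted_family (size_flatten_map_const (m := 2)) // size_iota; lia.
split; first by move=> M /flatten_mapP[j _]; exact: sigma_balanced_pair.
split; first by move=> M /flatten_mapP[j _]; exact: sigma_tilted_pair.
by rewrite intv_target undup_id ?uniq_target_values.
Qed.
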